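(* Let $n=2r+1$, let $\pi$ be an irreducible generic unitarizable representation of $G_n$, and let $W_{v_m}$ be its normalized Howe vector of level $m$. Let $$g=\begin{pmatrix}0&a\\ b\omega_r&0\end{pmatrix}\begin{pmatrix}u_r&0&u_r\omega_ra'u\\0&1&0\\0&0&I_r\end{pmatrix},$$ where $a=\mathrm{diag}(a_1,\dots,a_{r+1})\in A_{r+1}$, $a'=\mathrm{diag}(a'_1,\dots,a'_r)\in A_r$, $b=\mathrm{diag}(b_1,\dots,b_r)\in A_r$, $u_r\in N_r$, $u\in N_r$ (the first factor has block sizes with $a$ in the upper right $(r+1)\times(r+1)$ position and $b\omega_r$ in the lower left $r\times r$ position). If $W_{v_m}(g)\ne0$, then $a_i/a_{i+1}\in1+\mathfrak p^m$ for $i=1,\dots,r$, the matrix $\begin{pmatrix}I_r&0&\omega_ra'u\\0&1&0\\0&0&I_r\end{pmatrix}$ lies in $J_{n,m}$, and $$W_{v_m}(g)=W_{v_m}\left(\begin{pmatrix}0&a\\ b\omega_r&0\end{pmatrix}\begin{pmatrix}u_r&0&0\\0&1&0\\0&0&I_r\end{pmatrix}\right).$$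
   Context: $F$ is a $p$-adic field, $\mathcal O$ its ring of integers, $\mathfrak p$ its maximal ideal, $\varpi$ a uniformizer; $\psi$ is a nontrivial additive character with conductor $\mathcal O$, extended to $N_n$ (upper triangular unipotent) by $\psi(u)=\psi(\sum u_{i,i+1})$. $A_k$ denotes diagonal matrices in $G_k=GL_k(F)$, $N_k$ upper triangular unipotent matrices, $\omega_k$ the $k\times k$ antidiagonal permutation matrix. Howe vectors: $K_n^m=I_n+M_n(\mathfrak p^m)$, $d=\mathrm{diag}(1,\varpi^2,\dots,\varpi^{2n-2})$, $J_{n,m}=d^mK_n^md^{-m}$, $N_{n,m}=N_n\cap J_{n,m}$, $\bar B_{n,m}=\bar B_n\cap J_{n,m}$ ($\bar B_n$ lower triangular Borel); $J_{n,m}=\bar B_{n,m}N_{n,m}$ and for $j=\bar b_jn_j$ put $\psi_m(j)=\psi(n_j)$. The normalized Howe vector of level $m$ is the unique (for $m$ large) $W_{v_m}\in\mathcal W(\pi,\psi)$ with $W_{v_m}(gj)=\psi_m(j)W_{v_m}(g)$ for all $g\in G_n$, $j\in J_{n,m}$, and $W_{v_m}(I_n)=1$. *)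

From HB Require Import structures.
From mathcomp Require Import all_boot all_order all_algebra.
Set Implicit Arguments. Unset Strict Implicit. Unset Printing Implicit Defensive.
Import Order.TTheory GRing.Theory Num.Theory.
Local Open Scope ring_scope.

Section PadicDefs.
Variables (F : fieldType) (O : pred F) (varpi : F).

Definition inpm (m : nat) (x : F) : bool := O (x / varpi ^+ m).

(* (F, O, varpi) is a p-adic field: a complete discretely valued field of
   characteristic 0 with finite residue field, valuation ring O, uniformizer varpi. *)
Definition padic_field : Prop :=
  (O 0 /\ O 1 /\ (forall x y, O x -> O y -> O (x - y)) /\
      (forall x y, O x -> O y -> O (x * y))) /\
  (O varpi /\ varpi != 0 /\ ~~ O varpi^-1) /\
  (forall x, x != 0 -> exists (k : int) (u : F),
          [/\ O u, O u^-1 & x = varpi ^ k * u]) /\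
  (exists s : seq F, forall x, O x -> exists2 y, y \in s & O ((x - y) / varpi)) /\
  (forall k : nat, k.+1%:R != 0 :> F) /\
  (forall x : nat -> F,
     (forall k, exists N, forall i j, (N <= i)%N -> (N <= j)%N -> inpm k (x i - x j)) ->
     exists l, forall k, exists N, forall i, (N <= i)%N -> inpm k (x i - l)).

Variable C : numClosedFieldType.
Variable psi : F -> C.

Definition add_char_conductor_O : Prop :=
  [/\ (forall x y, psi (x + y) = psi x * psi y),
      (forall x, O x -> psi x = 1) &
      (exists x, O (varpi * x) /\ psi x != 1)].

Variable n : nat.

Definition upper_unipotent (u : 'M[F]_n) : Prop :=
  (forall i j : 'I_n, (j < i)%N -> u i j = 0) /\ (forall i, u i i = 1).

Definition lower_borel (b : 'M[F]_n) : Prop :=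
  b \in unitmx /\ (forall i j : 'I_n, (i < j)%N -> b i j = 0).

Definition psiN (u : 'M[F]_n) : C :=
  psi (\sum_(i < n) \sum_(j < n | nat_of_ord j == i.+1) u i j).

Definition inK (k : nat) (x : 'M[F]_n) : Prop :=
  forall i j : 'I_n, inpm k (x i j - (i == j)%:R).

Definition dpow (m : nat) : 'M[F]_n := diag_mx (\row_(i < n) varpi ^+ (2 * i * m)).
Definition dpowinv (m : nat) : 'M[F]_n := diag_mx (\row_(i < n) (varpi ^+ (2 * i * m))^-1).

Definition inJ (m : nat) (j : 'M[F]_n) : Prop := inK m (dpowinv m *m j *m dpow m).

Variable V : lmodType C.
Variable rho : 'M[F]_n -> V -> V.

Definition smooth_rep : Prop :=
  [/\ (forall g, g \in unitmx -> forall (c : C) v w, rho g (c *: v + w) = c *: rho g v + rho g w),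
      (forall v, rho 1%:M v = v),
      (forall g h, g \in unitmx -> h \in unitmx -> forall v, rho (g *m h) v = rho g (rho h v)) &
      (forall v, exists k, (0 < k)%N /\ forall x, inK k x -> rho x v = v)].

Definition irreducible_rep : Prop :=
  (exists v : V, v != 0) /\
  forall S : pred V,
    S 0 -> (forall (c : C) v w, S v -> S w -> S (c *: v + w)) ->
    (forall g v, g \in unitmx -> S v -> S (rho g v)) ->
    (forall v, S v -> v = 0) \/ (forall v, S v).

Definition unitarizable : Prop :=
  exists h : V -> V -> C,
    [/\ (forall (c : C) v w x, h (c *: v + w) x = c * h v x + h w x),
        (forall x y, h x y = (h y x)^*),
        (forall v, v != 0 -> 0 < h v v) &
        (forall g v w, g \in unitmx -> h (rho g v) (rho g w) = h v w)].

(* lam is a nonzero (psi-)Whittaker functional; its existence = genericity *)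
Definition whittaker_functional (lam : V -> C) : Prop :=
  [/\ (forall (c : C) v w, lam (c *: v + w) = c * lam v + lam w),
      (exists v, lam v != 0) &
      (forall u v, upper_unipotent u -> lam (rho u v) = psiN u * lam v)].

(* W is in the Whittaker model W(pi,psi) and is a normalized Howe vector of
   level m: W(gj) = psi_m(j) W(g) for j = bbar n in J_{n,m} = Bbar_{n,m} N_{n,m},
   psi_m(j) = psi(n), and W(I_n) = 1. *)
Definition howe_vector (lam : V -> C) (m : nat) (W : 'M[F]_n -> C) : Prop :=
  [/\ (exists v, forall g, g \in unitmx -> W g = lam (rho g v)),
      W 1%:M = 1 &
      (forall g bb nn, g \in unitmx ->
          lower_borel bb -> inJ m bb -> upper_unipotent nn -> inJ m nn ->
          W (g *m (bb *m nn)) = psiN nn * W g)].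

End PadicDefs.

Definition omega (F : fieldType) (r : nat) : 'M[F]_r :=
  \matrix_(i < r, j < r) (nat_of_ord i + nat_of_ord j == r.-1)%:R.

Lemma sz3 (r : nat) : (r + (1 + r) = r.*2.+1)%N.
Proof. by rewrite add1n addnS -addnn. Qed.
Lemma sz2 (r : nat) : (r.+1 + r = r.*2.+1)%N.
Proof. by rewrite addSn -addnn. Qed.
Lemma sz2' (r : nat) : (r + r.+1 = r.*2.+1)%N.
Proof. by rewrite addnS -addnn. Qed.

(* [[A, 0, B], [0, 1, 0], [0, 0, I_r]] with block sizes r, 1, r *)
Definition blk3 (F : fieldType) (r : nat) (A B : 'M[F]_r) : 'M[F]_(r.*2.+1) :=
  castmx (sz3 r, sz3 r) (block_mx A (row_mx 0 B) 0 1%:M).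

(* [[0, a], [b omega_r, 0]], rows split r+1 | r, columns split r | r+1 *)
Definition antiblk (F : fieldType) (r : nat) (a : 'rV[F]_(r.+1)) (b : 'rV[F]_r) :
  'M[F]_(r.*2.+1) :=
  castmx (sz2 r, sz2' r) (block_mx 0 (diag_mx a) (diag_mx b *m omega F r) 0).

From HB Require Import structures.
From mathcomp Require Import all_boot all_order all_algebra.
From mathcomp Require Import zify ring.
Import Order.TTheory GRing.Theory Num.Theory.
Local Open Scope ring_scope.

(* Write g = h k(Y) with h = [[0, a], [b omega_r, 0]],
   k(Y) = [[u_r, 0, u_r Y], [0, 1, 0], [0, 0, I_r]] and Y = omega_r a' u, and clear the columns of
   Y from left to right without changing W.  When the first i columns of Y vanish, column r+i of g
   is a_i e_i, so conjugating by g an elementary matrix 1 + c E_{r+i,l} of J_{n,m} gives the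
   identity plus a single row, an element of N_n.  Comparing the left N_n- and the right
   J_{n,m}-equivariance of W at g, where W(g) <> 0, shows that psi is trivial on the resulting
   entry for every admissible c: for l < r+i this bounds the i-th column of Y, and for
   l = r+i+1 it gives a_i/a_{i+1} in 1 + p^m.  That bound puts the unipotent matrix carrying the
   i-th column of Y into N_{n,m}, on which psi is trivial, so clearing the column leaves W
   unchanged. *)

Set Implicit Arguments.
Unset Strict Implicit.
Unset Printing Implicit Defensive.

Lemma castmx_mul (R : pzSemiRingType) m m' k k' l l' (em : m = m') (ek : k = k') (el : l = l')
    (A : 'M[R]_(m, k)) (B : 'M[R]_(k, l)) :
  castmx (em, ek) A *m castmx (ek, el) B = castmx (em, el) (A *m B).
Proof. by case: m' / em; case: k' / ek; case: l' / el; rewrite !castmx_id. Qed.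

Lemma castmx1 (R : pzSemiRingType) m m' (e : m = m') : castmx (e, e) (1%:M : 'M[R]_m) = 1%:M.
Proof. by case: m' / e; rewrite castmx_id. Qed.

Lemma eq_inord n (p : 'I_n.+1) k : (k <= n)%N -> (p == inord k) = ((p : nat) == k).
Proof. by move=> kn; rewrite -val_eqE /= inordK. Qed.

Section HoweVectorSupport.
Variables (F : fieldType) (O : pred F) (varpi : F).
Hypothesis hF : padic_field O varpi.

Lemma valring0 : O 0. Proof. by case: hF => [[]]. Qed.
Lemma valring1 : O 1. Proof. by case: hF => [[_ []]]. Qed.

Lemma valringB x y : O x -> O y -> O (x - y).
Proof. by case: hF => [[_ [_ [h _]]]] _; apply: h. Qed.

Lemma valringM x y : O x -> O y -> O (x * y).
Proof. by case: hF => [[_ [_ [_ h]]]] _; apply: h. Qed.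

Lemma valringN x : O x -> O (- x).
Proof. by move=> Ox; rewrite -sub0r valringB ?valring0. Qed.

Lemma valring_uniformizer : O varpi. Proof. by case: hF => _ [[]]. Qed.
Lemma uniformizer_neq0 : varpi != 0. Proof. by case: hF => _ [[_ []]]. Qed.
Lemma uniformizer_invN : ~~ O varpi^-1. Proof. by case: hF => _ [[_ []]]. Qed.

Lemma valring_exp k : O (varpi ^+ k).
Proof.
elim: k => [|k IHk]; first by rewrite expr0 valring1.
by rewrite exprS valringM ?valring_uniformizer.
Qed.

Lemma expu_neq0 k : varpi ^+ k != 0.
Proof. by rewrite expf_neq0 ?uniformizer_neq0. Qed.

(* Either v(x) >= 0 or v(x) < 0, i.e. v(x^-1) >= 1. *)
Lemma valring_or_inv x : x != 0 -> O x \/ O (x^-1 / varpi).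
Proof.
move=> x0; case: hF => _ [_ [hval _]]; have [k [u [Ou Ou' xE]]] := hval x x0.
have u0 : u != 0 by apply: contraNneq x0 => u0; rewrite xE u0 mulr0.
case: k xE => k ->; first by left; rewrite valringM ?valring_exp.
right; have -> : (varpi ^ Negz k * u)^-1 / varpi = varpi ^+ k * u^-1.
  have -> : varpi ^ Negz k = (varpi ^+ k.+1)^-1 by [].
  by rewrite exprS; field; rewrite u0 uniformizer_neq0 expu_neq0.
by rewrite valringM ?valring_exp.
Qed.

Lemma valring_inv_near1 m w : (0 < m)%N -> w != 0 -> inpm O varpi m (w - 1) -> O w^-1.
Proof.
move=> m_gt0 w0 w1; have [|//|Ow] := valring_or_inv (x := w^-1); first by rewrite invr_eq0.
rewrite invrK in Ow.
have O_w1 : O ((w - 1) / varpi).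
  have -> : (w - 1) / varpi = (w - 1) / varpi ^+ m * varpi ^+ m.-1.
    by rewrite -(prednK m_gt0) exprS; field; rewrite uniformizer_neq0 expu_neq0.
  by rewrite valringM ?valring_exp.
have := valringB Ow O_w1; rewrite -mulrBl opprB addrC subrK mul1r.
by move/negP: uniformizer_invN.
Qed.

Variables (C : numClosedFieldType) (psi : F -> C).
Hypothesis hpsi : add_char_conductor_O O varpi psi.

Lemma psiD x y : psi (x + y) = psi x * psi y. Proof. by case: hpsi. Qed.
Lemma psi0 : psi 0 = 1. Proof. by case: hpsi => _ -> //; apply: valring0. Qed.

Lemma psi_neq0 x : psi x != 0.
Proof.
apply: contra_eq_neq (psiD x (- x)) => ->.
by rewrite subrr psi0 mul0r oner_neq0.
Qed.

Lemma valring_psi_trivial z : (forall t, O t -> psi (t * z) = 1) -> O z.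
Proof.
move=> psi_z; have [z0|z0] := eqVneq z 0; first by rewrite z0 valring0.
have [//|Oz'] := valring_or_inv z0.
case: hpsi => _ _ [x [Ox psix]].
have := psi_z _ (valringM Ox Oz').
have -> : varpi * x * (z^-1 / varpi) * z = x by field; rewrite z0 uniformizer_neq0.
by move/eqP; rewrite (negbTE psix).
Qed.

Section HoweVectors.
Variable n : nat.
Implicit Types (g j x : 'M[F]_n) (p q al be : 'I_n).

Lemma conj_dpowE m j p q :
  (dpowinv varpi n m *m j *m dpow varpi n m) p q
  = (varpi ^+ (2 * p * m))^-1 * j p q * varpi ^+ (2 * q * m).
Proof. by rewrite /dpowinv /dpow mul_mx_diag mxE mul_diag_mx !mxE. Qed.

Lemma inJ_of_offdiag m j : (forall p, j p p = 1) ->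
  (forall p q, p != q ->
     O (j p q * varpi ^+ (2 * q * m) / varpi ^+ (2 * p * m) / varpi ^+ m)) ->
  inJ O varpi m j.
Proof.
move=> j_diag j_off p q; rewrite /inpm conj_dpowE.
have [<-|pq] := eqVneq p q.
  by rewrite j_diag mulr1 mulVf ?expu_neq0 //= mulr1n subrr mul0r valring0.
rewrite mulr0n subr0.
by have := j_off p q pq; congr O; field; rewrite !expu_neq0.
Qed.

Lemma inJ1 m : inJ O varpi m (1%:M : 'M[F]_n).
Proof.
apply: inJ_of_offdiag => [p|p q pq]; first by rewrite mxE eqxx.
by rewrite mxE (negbTE pq) !mul0r valring0.
Qed.

Lemma upper_unipotent1 : upper_unipotent (1%:M : 'M[F]_n).
Proof. by split=> [p q /ltn_eqF qp|p]; rewrite mxE ?eqxx // -val_eqE /= eq_sym qp. Qed.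

Lemma lower_borel1 : lower_borel (1%:M : 'M[F]_n).
Proof. by split=> [|p q /ltn_eqF pq]; rewrite ?unitmx1 // mxE -val_eqE /= pq. Qed.

Lemma upper_unipotent_unit x : upper_unipotent x -> x \in unitmx.
Proof.
case=> x_low x_diag; rewrite unitmxE -det_tr det_trig.
  by rewrite (eq_bigr (fun _ => 1)) ?prodr_const ?expr1n ?unitr1 // => p _; rewrite mxE.
by apply/is_trig_mxP => p q qp; rewrite mxE x_low.
Qed.

Lemma psiN_eq1 x : (forall p q, (q : nat) = p.+1 -> x p q = 0) -> psiN psi x = 1.
Proof.
move=> x_super; rewrite /psiN big1 ?psi0 // => p _.
by rewrite big1 // => q /eqP /x_super.
Qed.

Lemma psiN1 : psiN psi (1%:M : 'M[F]_n) = 1.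
Proof. by apply: psiN_eq1 => p q qp; rewrite mxE -val_eqE /= qp ltn_eqF. Qed.

Lemma psiN_row x (i j : 'I_n) (d : 'I_n -> F) : (j : nat) = i.+1 ->
  (forall p q, x p q = (p == q)%:R + (p == i)%:R * d q) -> psiN psi x = psi (d j).
Proof.
move=> ji xE; rewrite /psiN (bigD1 i) //= (big_pred1 j) => [|q]; last by rewrite /= -val_eqE /= ji.
rewrite xE eqxx mul1r -val_eqE /= ji ltn_eqF // add0r big1 ?addr0 // => p pi.
by rewrite big1 // => q /eqP qp; rewrite xE (negbTE pi) mul0r addr0 -val_eqE /= qp ltn_eqF.
Qed.

Lemma upper_unipotent_row x (i : 'I_n) (d : 'I_n -> F) :
  (forall q : 'I_n, (q <= i)%N -> d q = 0) ->
  (forall p q, x p q = (p == q)%:R + (p == i)%:R * d q) -> upper_unipotent x.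
Proof.
move=> d0 xE; split=> [p q qp|p]; rewrite xE.
  rewrite -val_eqE /= (gtn_eqF qp) add0r; case: eqP => [pi|]; last by rewrite mul0r.
  by rewrite d0 ?mulr0 // -pi ltnW.
by rewrite eqxx; case: eqP => [->|]; rewrite ?(d0 _ (leqnn _)) ?mulr0 ?mul0r ?addr0.
Qed.

Definition elmx (c : F) (al be : 'I_n) : 'M[F]_n := 1%:M + c *: delta_mx al be.

Lemma elmxE c al be p q :
  elmx c al be p q = (p == q)%:R + (p == al)%:R * (c * (q == be)%:R).
Proof.
by rewrite !mxE !mulrb; case: (p == al); case: (q == be); rewrite ?mulr1 ?mulr0 ?mul1r ?mul0r.
Qed.

Lemma inJ_elmx m c al be : al != be ->
  O (c * varpi ^+ (2 * be * m) / varpi ^+ (2 * al * m) / varpi ^+ m) ->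
  inJ O varpi m (elmx c al be).
Proof.
move=> alNbe Oc; apply: inJ_of_offdiag => [p|p q pq]; rewrite elmxE ?eqxx ?(negbTE pq).
  by have [->|_] := eqVneq p al; rewrite ?(negbTE alNbe) ?mulr0 ?mul0r addr0.
have [->|_] := eqVneq p al; have [->|_] := eqVneq q be; rewrite ?add0r ?mul1r ?mulr1 //.
  all: by rewrite ?mulr0 ?mul0r valring0.
Qed.

Lemma lower_borel_elmx c al be : (be < al)%N -> lower_borel (elmx c al be).
Proof.
move=> beal; have alNbe : al != be by rewrite -val_eqE /= gtn_eqF.
split=> [|p q pq].
  suff : elmx c al be *m elmx (- c) al be = 1%:M by case/mulmx1_unit.
  rewrite /elmx mulmxDl !mul1mx mulmxDr mulmx1 -!scalemxAl -scalemxAr mul_delta_mx_0 1?eq_sym //.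
  by rewrite !scaler0 addr0 scaleNr addrNK.
rewrite elmxE -val_eqE /= (ltn_eqF pq) add0r.
have [pal|_] := eqVneq p al; have [qbe|_] := eqVneq q be; rewrite ?mulr0 ?mul0r //.
by move: pq; rewrite pal qbe ltnNge ltnW.
Qed.

Lemma upper_unipotent_elmx c al be : (al < be)%N -> upper_unipotent (elmx c al be).
Proof.
move=> albe; split=> [p q qp|p]; rewrite elmxE.
  rewrite -val_eqE /= (gtn_eqF qp) add0r.
  have [pal|_] := eqVneq p al; have [qbe|_] := eqVneq q be; rewrite ?mulr0 ?mul0r //.
  by move: qp; rewrite pal qbe ltnNge ltnW.
rewrite eqxx; have [->|_] := eqVneq p al; last by rewrite mul0r addr0.
by rewrite (_ : al == be = false) ?mulr0 ?addr0 // -val_eqE ltn_eqF.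
Qed.

Lemma psiN_elmx c (al be : 'I_n) : (be : nat) = al.+1 -> psiN psi (elmx c al be) = psi c.
Proof.
move=> beal; rewrite (psiN_row (d := fun q => c * (q == be)%:R) beal) ?eqxx ?mulr1 //.
exact: elmxE.
Qed.

Variables (V : lmodType C) (rho : 'M[F]_n -> V -> V) (lam : V -> C).
Variables (m : nat) (W : 'M[F]_n -> C).
Hypotheses (hrho : smooth_rep O varpi rho) (hlam : whittaker_functional psi rho lam).
Hypothesis hW : howe_vector O varpi psi rho lam m W.

Lemma W_unipotentL x g : upper_unipotent x -> g \in unitmx -> W (x *m g) = psiN psi x * W g.
Proof.
move=> ux ug; case: hW => [[v Wv] _ _]; case: hrho => _ _ rhoM _; case: hlam => _ _ lamN.
have xu := upper_unipotent_unit ux.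
by rewrite !Wv ?unitmx_mul ?xu ?ug // rhoM // lamN.
Qed.

Lemma W_unipotentR g x : g \in unitmx -> upper_unipotent x -> inJ O varpi m x ->
  W (g *m x) = psiN psi x * W g.
Proof.
move=> ug ux Jx; case: hW => _ _ WJ.
by rewrite -(WJ g 1%:M x ug lower_borel1 (inJ1 m) ux Jx) mul1mx.
Qed.

Lemma W_lower_borelR g x : g \in unitmx -> lower_borel x -> inJ O varpi m x -> W (g *m x) = W g.
Proof.
move=> ug bx Jx; case: hW => _ _ WJ.
by rewrite -[RHS]mul1r -psiN1 -(WJ g x 1%:M ug bx Jx upper_unipotent1 (inJ1 m)) mulmx1.
Qed.

(* When column [al] of [g] is a multiple of e_i, [g (elmx c al be) g^-1] is the identity plus
   a single row and hence lies in N_n. *)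
Lemma psi_conj_elmx g (al be i j : 'I_n) (alpha c : F) (z : C) :
  g \in unitmx -> W g != 0 ->
  (forall p, g p al = (p == i)%:R * alpha) ->
  (forall q : 'I_n, (q <= i)%N -> invmx g be q = 0) ->
  (j : nat) = i.+1 ->
  W (g *m elmx c al be) = z * W g ->
  psi (c * alpha * invmx g be j) = z.
Proof.
move=> ug Wg0 g_al ginv0 ji Wgz.
pose d q := c * alpha * invmx g be q.
pose x := 1%:M + c *: (g *m delta_mx al be *m invmx g).
have xE p q : x p q = (p == q)%:R + (p == i)%:R * d q.
  rewrite /x -(mul_delta_mx (0 : 'I_1)) mulmxA -colE -mulmxA -rowE.
  by rewrite !mxE big_ord1 !mxE g_al /d; ring.
have xg : x *m g = g *m elmx c al be.
  rewrite mulmxDl mul1mx -scalemxAl -mulmxA mulVmx // mulmx1.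
  by rewrite /elmx mulmxDr mulmx1 -scalemxAr.
have ux : upper_unipotent x.
  by apply: (upper_unipotent_row (d := d)) => // q /ginv0; rewrite /d => ->; rewrite mulr0.
have := W_unipotentL ux ug; rewrite xg Wgz (psiN_row ji xE).
by move/(mulIf Wg0).
Qed.

End HoweVectors.

Section Blocks.
Variable r : nat.
Local Notation n := r.*2.+1.

Lemma blk3M (A B A' B' : 'M[F]_r) :
  blk3 A B *m blk3 A' B' = blk3 (A *m A') (A *m B' + B).
Proof.
rewrite /blk3 castmx_mul mulmx_block.
by rewrite !(mulmx0, mul0mx, mulmx1, mul1mx, addr0, add0r, mul_mx_row, add_row_mx).
Qed.

Lemma blk3_10 : blk3 (1%:M : 'M[F]_r) 0 = 1%:M.
Proof. by rewrite /blk3 row_mx0 -scalar_mx_block castmx1. Qed.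

Lemma blk3E_topleft (A B : 'M[F]_r) (p q : 'I_n) (p' q' : 'I_r) :
  (p : nat) = p' -> (q : nat) = q' -> blk3 A B p q = A p' q'.
Proof.
move=> pp' qq'; rewrite /blk3 castmxE.
have -> : cast_ord (esym (sz3 r)) p = lshift (1 + r) p' by apply/val_inj.
have -> : cast_ord (esym (sz3 r)) q = lshift (1 + r) q' by apply/val_inj.
by rewrite block_mxEul.
Qed.

Lemma blk3E_middle (A B : 'M[F]_r) (p q : 'I_n) :
  (p < r)%N -> (q : nat) = r -> blk3 A B p q = 0.
Proof.
move=> pr qr; rewrite /blk3 castmxE.
have -> : cast_ord (esym (sz3 r)) p = lshift (1 + r) (Ordinal pr) by apply/val_inj.
have -> : cast_ord (esym (sz3 r)) q = rshift r (lshift r (ord0 : 'I_1)).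
  by apply/val_inj; rewrite /= qr addn0.
by rewrite block_mxEur row_mxEl mxE.
Qed.

Lemma blk3E_topright (A B : 'M[F]_r) (p q : 'I_n) (p' l : 'I_r) :
  (p : nat) = p' -> (q : nat) = (r.+1 + l)%N -> blk3 A B p q = B p' l.
Proof.
move=> pp' ql; rewrite /blk3 castmxE.
have -> : cast_ord (esym (sz3 r)) p = lshift (1 + r) p' by apply/val_inj.
have -> : cast_ord (esym (sz3 r)) q = rshift r (rshift 1 l) by apply/val_inj; rewrite /= ql; lia.
by rewrite block_mxEur row_mxEr.
Qed.

Lemma blk3E_bottom (A B : 'M[F]_r) (p q : 'I_n) :
  (r <= p)%N -> blk3 A B p q = (p == q)%:R.
Proof.
move=> rp; rewrite /blk3 castmxE.
have p_lt : (p - r < 1 + r)%N by have := ltn_ord p; lia.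
have -> : cast_ord (esym (sz3 r)) p = rshift r (Ordinal p_lt) by apply/val_inj => /=; lia.
have [qr|rq] := ltnP q r.
  have -> : cast_ord (esym (sz3 r)) q = lshift (1 + r) (Ordinal qr) by apply/val_inj.
  rewrite block_mxEdl mxE (_ : p == q = false) // -val_eqE gtn_eqF //.
  exact: leq_trans qr rp.
have q_lt : (q - r < 1 + r)%N by have := ltn_ord q; lia.
have -> : cast_ord (esym (sz3 r)) q = rshift r (Ordinal q_lt) by apply/val_inj => /=; lia.
rewrite block_mxEdr mxE -!val_eqE /=; congr (_%:R).
by apply/eqP/eqP; lia.
Qed.

Lemma blk3_1E (B : 'M[F]_r) (p q : 'I_n) :
  (q <= r)%N || (r <= p)%N -> blk3 1%:M B p q = (p == q)%:R.
Proof.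
have [rp _|pr] := leqP r p; first by rewrite blk3E_bottom.
rewrite orbF => qr; have [qr'|rq] := ltnP q r.
  by rewrite (@blk3E_topleft _ _ p q (Ordinal pr) (Ordinal qr')) // mxE -!val_eqE.
rewrite blk3E_middle //; last by apply/eqP; rewrite eqn_leq qr.
rewrite (_ : p == q = false) // -val_eqE ltn_eqF //.
exact: leq_trans pr rq.
Qed.

Lemma upper_unipotent_blk3 (B : 'M[F]_r) : upper_unipotent (blk3 1%:M B).
Proof.
split=> [p q qp|p]; last by rewrite blk3_1E ?eqxx ?leq_total.
rewrite blk3_1E -?val_eqE ?gtn_eqF //.
by case: (leqP r p) => [_|pr]; rewrite ?orbT // ltnW // (ltn_trans qp pr).
Qed.

Lemma psiN_blk3 (B : 'M[F]_r) : psiN psi (blk3 1%:M B) = 1.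
Proof.
apply: psiN_eq1 => p q qp; rewrite blk3_1E -?val_eqE /= ?qp ?ltn_eqF //.
by case: (leqP r p) => [_|pr]; rewrite ?orbT // qp.
Qed.

Lemma inJ_blk3 m (B : 'M[F]_r) :
  (forall k l, O (B k l * varpi ^+ ((r + l - k).*2.+1 * m))) -> inJ O varpi m (blk3 1%:M B).
Proof.
move=> OB; apply: inJ_of_offdiag => [p|p q pq].
  by rewrite blk3_1E ?eqxx ?leq_total.
have [rq|qr] := ltnP r q; last by rewrite blk3_1E ?qr // (negbTE pq) !mul0r valring0.
have [pr|rp] := ltnP p r; last by rewrite blk3_1E ?rp ?orbT // (negbTE pq) !mul0r valring0.
have l_lt : (q - r.+1 < r)%N by have := ltn_ord q; lia.
rewrite (@blk3E_topright _ _ p q (Ordinal pr) (Ordinal l_lt)) //=; last by lia.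
have := OB (Ordinal pr) (Ordinal l_lt); congr O => /=.
have -> : (2 * q * m = (r + (q - r.+1) - p).*2.+1 * m + 2 * p * m + m)%N.
  by rewrite -mulnDl -[X in (_ + X)%N]mul1n -mulnDl; congr (_ * m)%N; lia.
by rewrite !exprD; field; rewrite !expu_neq0.
Qed.

Lemma omega_invol : omega F r *m omega F r = 1%:M.
Proof.
apply/matrixP => i j; rewrite !mxE (bigD1 (rev_ord i)) //= big1 ?addr0 => [|k ki].
  rewrite !mxE (_ : (i + (r - i.+1) == r.-1)%N); last by apply/eqP; have := ltn_ord i; lia.
  rewrite mul1r -val_eqE /=; congr (_%:R); apply/eqP/eqP; have := ltn_ord i; have := ltn_ord j; lia.
rewrite !mxE; case: eqP => ik; rewrite ?mul0r //.
by case/negP: ki; rewrite -val_eqE /=; apply/eqP; have := ltn_ord i; lia.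
Qed.

Variables (a : 'rV[F]_r.+1) (b : 'rV[F]_r).

Lemma antiblkE_right (p q : 'I_n) (j : 'I_r.+1) :
  (q : nat) = (r + j)%N -> antiblk a b p q = ((p : nat) == j)%:R * a 0 j.
Proof.
move=> qj; rewrite /antiblk castmxE.
have -> : cast_ord (esym (sz2' r)) q = rshift r j by apply/val_inj.
have [pr|rp] := ltnP p r.+1.
  have -> : cast_ord (esym (sz2 r)) p = lshift r (Ordinal pr) by apply/val_inj.
  rewrite block_mxEur mxE mulr_natl -[(p : nat) == j]/(Ordinal pr == j).
  by case: eqP => [->|].
have p_lt : (p - r.+1 < r)%N by have := ltn_ord p; lia.
have -> : cast_ord (esym (sz2 r)) p = rshift r.+1 (Ordinal p_lt) by apply/val_inj => /=; lia.
rewrite block_mxEdr mxE (_ : (p == j :> nat) = false) ?mul0r //.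
by apply/negbTE; rewrite neq_ltn (leq_trans (ltn_ord j) rp) orbT.
Qed.

Hypotheses (a_neq0 : forall i, a 0 i != 0) (b_neq0 : forall i, b 0 i != 0).

Lemma antiblk_unit : antiblk a b \in unitmx.
Proof.
pose inv_a := diag_mx (\row_k (a 0 k)^-1); pose inv_b := diag_mx (\row_k (b 0 k)^-1).
suff : antiblk a b *m castmx (sz2' r, sz2 r) (block_mx 0 (omega F r *m inv_b) inv_a 0) = 1%:M.
  by case/mulmx1_unit.
rewrite /antiblk castmx_mul mulmx_block !(mulmx0, mul0mx, addr0, add0r) !mulmx_diag.
rewrite -mulmxA (mulmxA (omega F r)) omega_invol mul1mx mulmx_diag.
rewrite (_ : \row_j (a 0 j * _) = const_mx 1); last by apply/rowP => j; rewrite !mxE divff.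
rewrite (_ : \row_j (b 0 j * _) = const_mx 1); last by apply/rowP => j; rewrite !mxE divff.
by rewrite !diag_const_mx -scalar_mx_block castmx1.
Qed.

Lemma invmx_antiblkE (j : 'I_r.+1) (t q : 'I_n) : (q : nat) = j ->
  invmx (antiblk a b) t q = (t == inord (r + j))%:R / a 0 j.
Proof.
move=> qj; have rj : ((inord (r + j) : 'I_n) : nat) = (r + j)%N.
  by rewrite inordK //; have := ltn_ord j; lia.
have := congr1 (fun M : 'M[F]_n => M t (inord (r + j))) (mulVmx antiblk_unit).
rewrite /= mxE (bigD1 q) //= big1 ?addr0 => [|s sq]; last first.
  rewrite (antiblkE_right _ rj) (_ : (s == j :> nat) = false) ?mul0r ?mulr0 //.
  by rewrite -qj val_eqE (negbTE sq).
by rewrite (antiblkE_right _ rj) qj eqxx mul1r mxE => <-; rewrite mulfK.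
Qed.

Variable ur : 'M[F]_r.
Hypothesis ur_unipotent : upper_unipotent ur.

(* [twist (omega_r a' u)] is the matrix g of the statement. *)
Definition twist (Z : 'M[F]_r) : 'M[F]_n := antiblk a b *m blk3 ur (ur *m Z).

Definition zero_cols (i : nat) (Z : 'M[F]_r) : 'M[F]_r :=
  \matrix_(k, l) if (l < i)%N then 0 else Z k l.

Lemma twistD Z D : twist (Z + D) = twist Z *m blk3 1%:M D.
Proof. by rewrite /twist -mulmxA blk3M mulmx1 mulmxDr addrC. Qed.

Lemma twist_mulmx_inv Z :
  twist Z *m (blk3 (invmx ur) (- Z) *m invmx (antiblk a b)) = 1%:M.
Proof.
rewrite /twist mulmxA -(mulmxA (antiblk a b)) blk3M mulmxV ?upper_unipotent_unit //.
by rewrite mulmxN addNr blk3_10 mulmx1 mulmxV ?antiblk_unit.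
Qed.

Lemma twist_unit Z : twist Z \in unitmx.
Proof. by case: (mulmx1_unit (twist_mulmx_inv Z)). Qed.

Lemma invmx_twist Z : invmx (twist Z) = blk3 (invmx ur) (- Z) *m invmx (antiblk a b).
Proof. by rewrite -[LHS]mulmx1 -(twist_mulmx_inv Z) mulKmx ?twist_unit. Qed.

Lemma twist_col Z (i : 'I_r) (p : 'I_n) :
  twist (zero_cols i Z) p (inord (r + i)) = (p == inord i)%:R * a 0 (widen_ord (leqnSn r) i).
Proof.
have ri : ((inord (r + i) : 'I_n) : nat) = (r + i)%N by rewrite inordK //; have := ltn_ord i; lia.
have col_unit t : blk3 ur (ur *m zero_cols i Z) t (inord (r + i)) = (t == inord (r + i))%:R.
  have [tr|rt] := ltnP t r; last by rewrite blk3E_bottom.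
  rewrite (_ : t == _ = false); last by rewrite -val_eqE /= ri ltn_eqF //; lia.
  have [i0|i_gt0] := posnP i; first by rewrite blk3E_middle // ri i0 addn0.
  have il : (i.-1 < r)%N by have := ltn_ord i; lia.
  rewrite (@blk3E_topright _ _ t _ (Ordinal tr) (Ordinal il)) //=; last by rewrite ri; lia.
  by rewrite mxE big1 // => s _; rewrite mxE ltn_predL i_gt0 mulr0.
rewrite mxE (bigD1 (inord (r + i))) //= big1 ?addr0 => [|t t_ne]; last first.
  by rewrite col_unit (negbTE t_ne) mulr0.
rewrite col_unit eqxx mulr1 (@antiblkE_right _ _ (widen_ord (leqnSn r) i)) //.
by rewrite -val_eqE /= inordK //; have := ltn_ord i; lia.
Qed.

Lemma invmx_twistE Z (t q : 'I_n) (j : 'I_r.+1) : (q : nat) = j ->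
  invmx (twist Z) t q = blk3 (invmx ur) (- Z) t (inord (r + j)) / a 0 j.
Proof.
move=> qj; rewrite invmx_twist mxE (bigD1 (inord (r + j))) //= big1 ?addr0 => [|s s_ne].
  by rewrite (invmx_antiblkE _ qj) eqxx mul1r.
by rewrite (invmx_antiblkE _ qj) (negbTE s_ne) mul0r mulr0.
Qed.

Lemma invmx_twist_top Z (i k : 'I_r) (q : 'I_n) :
  (q <= i)%N -> invmx (twist (zero_cols i Z)) (inord k) q = 0.
Proof.
move=> qi; have qr : (q < r.+1)%N by have := ltn_ord i; lia.
rewrite (@invmx_twistE _ _ _ (Ordinal qr)) //=.
have kk : ((inord k : 'I_n) : nat) = k by rewrite inordK //; have := ltn_ord k; lia.
have rq : ((inord (r + q) : 'I_n) : nat) = (r + q)%N by rewrite inordK //; lia.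
have [q0|q_gt0] := posnP q; first by rewrite blk3E_middle ?mul0r // ?kk ?rq ?q0 ?addn0.
have ql : (q.-1 < r)%N by lia.
rewrite (@blk3E_topright _ _ _ _ k (Ordinal ql)) //=; last by rewrite rq; lia.
by rewrite !mxE (_ : (q.-1 < i)%N) ?oppr0 ?mul0r //; lia.
Qed.

Lemma invmx_twist_top_next Z (i k : 'I_r) :
  invmx (twist (zero_cols i Z)) (inord k) (inord i.+1) = - Z k i / a 0 (lift ord0 i).
Proof.
have ir : (i.+1 < r.*2.+1)%N by have := ltn_ord i; lia.
rewrite (@invmx_twistE _ _ _ (lift ord0 i)); last by rewrite inordK.
have kk : ((inord k : 'I_n) : nat) = k by rewrite inordK //; have := ltn_ord k; lia.
rewrite (@blk3E_topright _ _ _ _ k i) //=.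
  by rewrite !mxE ltnn.
by rewrite inordK /bump leq0n add1n ?addSn //; have := ltn_ord i; lia.
Qed.

Lemma invmx_twist_bottom Z (i : 'I_r) (q : 'I_n) :
  (q <= i)%N -> invmx (twist Z) (inord (r + i).+1) q = 0.
Proof.
move=> qi; have ir := ltn_ord i; have qr : (q < r.+1)%N by lia.
rewrite (@invmx_twistE _ _ _ (Ordinal qr)) // blk3E_bottom; last by rewrite inordK //; lia.
rewrite eq_inord ?inordK /=; [|lia|lia].
by rewrite (_ : _ == _ = false) ?mul0r //; apply/eqP; lia.
Qed.

Lemma invmx_twist_bottom_next Z (i : 'I_r) :
  invmx (twist Z) (inord (r + i).+1) (inord i.+1) = (a 0 (lift ord0 i))^-1.
Proof.
have ir : (i.+1 < r.*2.+1)%N by have := ltn_ord i; lia.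
rewrite (@invmx_twistE _ _ _ (lift ord0 i)); last by rewrite inordK.
have -> : (r + lift ord0 i)%N = (r + i).+1 by rewrite -addnS.
by rewrite blk3E_bottom ?eqxx ?mul1r // inordK //; have := ltn_ord i; lia.
Qed.

Section TwistHowe.
Variables (V : lmodType C) (rho : 'M[F]_n -> V -> V) (lam : V -> C).
Variables (m : nat) (W : 'M[F]_n -> C).
Hypotheses (hrho : smooth_rep O varpi rho) (hlam : whittaker_functional psi rho lam).
Hypothesis hW : howe_vector O varpi psi rho lam m W.
Hypothesis m_gt0 : (0 < m)%N.
Variable Z : 'M[F]_r.

Lemma twist_column_bound_ratio (i k : 'I_r) : W (twist (zero_cols i Z)) != 0 ->
  O (Z k i * (a 0 (widen_ord (leqnSn r) i) / a 0 (lift ord0 i)) * varpi ^+ ((r + i - k).*2.+1 * m)).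
Proof.
move=> W0; apply: valring_psi_trivial => t Ot.
have ir := ltn_ord i; have kr := ltn_ord k.
(* p^e is the set of admissible entries of J_{n,m} at position (r+i, k). *)
set e := ((r + i - k).*2.+1 * m)%N; set c := - (t * varpi ^+ e).
have ri : ((inord (r + i) : 'I_n) : nat) = (r + i)%N by rewrite inordK //; lia.
have kk : ((inord k : 'I_n) : nat) = k by rewrite inordK //; lia.
have Wel : W (twist (zero_cols i Z) *m elmx c (inord (r + i)) (inord k))
           = 1 * W (twist (zero_cols i Z)).
  rewrite mul1r (W_lower_borelR hW (twist_unit _)) //.
    by apply: lower_borel_elmx; rewrite ri kk; lia.
  apply: inJ_elmx; first by rewrite -val_eqE /= ri kk; apply/eqP; lia.
  have eE : varpi ^+ (2 * k * m) = varpi ^+ (2 * (r + i) * m + m) / varpi ^+ e.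
    have -> : (2 * (r + i) * m + m = 2 * k * m + e)%N.
      by rewrite -mulSnr /e -mulnDl; congr (_ * m)%N; lia.
    by rewrite exprD mulfK ?expu_neq0.
  by rewrite ri kk eE exprD /c; have := valringN Ot; congr O; field; rewrite !expu_neq0.
have ii : ((inord i : 'I_n) : nat) = i by rewrite inordK //; lia.
have top0 (q : 'I_n) : (q <= (inord i : 'I_n))%N -> invmx (twist (zero_cols i Z)) (inord k) q = 0.
  by rewrite ii; apply: invmx_twist_top.
have ji : ((inord i.+1 : 'I_n) : nat) = (inord i : 'I_n).+1 by rewrite ii inordK //; lia.
have := psi_conj_elmx hrho hlam hW (twist_unit _) W0 (twist_col _ _) top0 ji Wel.
rewrite invmx_twist_top_next => <-.
by congr psi; rewrite /c; field; rewrite a_neq0.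
Qed.

Lemma twist_ratio (i : 'I_r) : W (twist (zero_cols i Z)) != 0 ->
  inpm O varpi m (a 0 (widen_ord (leqnSn r) i) / a 0 (lift ord0 i) - 1).
Proof.
move=> W0; apply: valring_psi_trivial => t Ot.
(* p^-m is the set of admissible entries of J_{n,m} at position (r+i, r+i+1). *)
have ir := ltn_ord i; set c := t / varpi ^+ m.
have ri : ((inord (r + i) : 'I_n) : nat) = (r + i)%N by rewrite inordK //; lia.
have ri1 : ((inord (r + i).+1 : 'I_n) : nat) = (r + i).+1 by rewrite inordK //; lia.
have Wel : W (twist (zero_cols i Z) *m elmx c (inord (r + i)) (inord (r + i).+1))
           = psi c * W (twist (zero_cols i Z)).
  rewrite (W_unipotentR hW (twist_unit _)) ?psiN_elmx ?ri ?ri1 //.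
    by apply: upper_unipotent_elmx; rewrite ri ri1.
  apply: inJ_elmx; first by rewrite -val_eqE /= ri ri1 (ltn_eqF (ltnSn _)).
  rewrite ri ri1 (_ : 2 * (r + i).+1 * m = 2 * (r + i) * m + m + m)%N; last first.
    by rewrite -!mulSnr; congr (_ * m)%N; lia.
  by rewrite !exprD /c; have := Ot; congr O; field; rewrite !expu_neq0.
have ii : ((inord i : 'I_n) : nat) = i by rewrite inordK //; lia.
have bottom0 (q : 'I_n) : (q <= (inord i : 'I_n))%N ->
    invmx (twist (zero_cols i Z)) (inord (r + i).+1) q = 0.
  by rewrite ii; apply: invmx_twist_bottom.
have ji : ((inord i.+1 : 'I_n) : nat) = (inord i : 'I_n).+1 by rewrite ii inordK //; lia.
have := psi_conj_elmx hrho hlam hW (twist_unit _) W0 (twist_col _ _) bottom0 ji Wel.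
rewrite invmx_twist_bottom_next => psi_ratio; apply: (mulfI (psi_neq0 c)).
rewrite mulr1 -psiD -psi_ratio; congr psi.
by rewrite /c; field; rewrite a_neq0 expu_neq0.
Qed.

Lemma twist_column_bound (i k : 'I_r) : W (twist (zero_cols i Z)) != 0 ->
  O (Z k i * varpi ^+ ((r + i - k).*2.+1 * m)).
Proof.
move=> W0; have ratio_neq0 : a 0 (widen_ord (leqnSn r) i) / a 0 (lift ord0 i) != 0.
  by rewrite mulf_neq0 ?invr_eq0 ?a_neq0.
have ratio_inv := valring_inv_near1 m_gt0 ratio_neq0 (twist_ratio W0).
have := valringM (twist_column_bound_ratio k W0) ratio_inv.
by congr O; field; rewrite !a_neq0.
Qed.

Lemma W_twist_zero_colsS (i : 'I_r) : W (twist (zero_cols i Z)) != 0 ->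
  W (twist (zero_cols i.+1 Z)) = W (twist (zero_cols i Z)).
Proof.
move=> W0; have -> : zero_cols i Z = zero_cols i.+1 Z + (zero_cols i Z - zero_cols i.+1 Z).
  by rewrite addrC subrK.
rewrite twistD (W_unipotentR hW (twist_unit _) (upper_unipotent_blk3 _)) ?psiN_blk3 ?mul1r //.
apply: inJ_blk3 => k l; rewrite !mxE.
have [li|il|/val_inj->] := ltngtP l i.
- by rewrite ltnW // subrr mul0r valring0.
- by rewrite ltnS leqNgt il subrr mul0r valring0.
- by rewrite ltnSn subr0; apply: twist_column_bound.
Qed.

Lemma W_twist_zero_cols i : W (twist Z) != 0 -> (i <= r)%N ->
  W (twist (zero_cols i Z)) = W (twist Z).
Proof.
move=> W0; elim: i => [_|i IHi ir]; first by congr (W (twist _)); apply/matrixP => k l; rewrite mxE.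
rewrite -(IHi (ltnW ir)) (W_twist_zero_colsS (i := Ordinal ir)) //.
by rewrite IHi ?(ltnW ir).
Qed.

Lemma twist_support : W (twist Z) != 0 ->
  [/\ forall i : 'I_r, inpm O varpi m (a 0 (widen_ord (leqnSn r) i) / a 0 (lift ord0 i) - 1),
      inJ O varpi m (blk3 1%:M Z) & W (twist Z) = W (twist 0)].
Proof.
move=> W0; have Wi (i : 'I_r) : W (twist (zero_cols i Z)) != 0.
  by rewrite W_twist_zero_cols // ltnW.
split.
- by move=> i; apply: twist_ratio (Wi i).
- by apply: inJ_blk3 => k l; apply: twist_column_bound (Wi l).
- rewrite -(W_twist_zero_cols W0 (leqnn r)); congr (W (twist _)).
  by apply/matrixP => k l; rewrite !mxE ltn_ord.
Qed.

End TwistHowe.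

End Blocks.

End HoweVectorSupport.

Theorem proposition3p4 (F : fieldType) (O : pred F) (varpi : F)
    (C : numClosedFieldType) (psi : F -> C) (r : nat)
    (V : lmodType C) (rho : 'M[F]_(r.*2.+1) -> V -> V) (lam : V -> C)
    (m : nat) (W : 'M[F]_(r.*2.+1) -> C)
    (a : 'rV[F]_(r.+1)) (a' b : 'rV[F]_r) (ur u : 'M[F]_r) :
  padic_field O varpi ->
  add_char_conductor_O O varpi psi ->
  smooth_rep O varpi rho ->
  irreducible_rep rho ->
  unitarizable rho ->
  whittaker_functional psi rho lam ->
  (0 < m)%N ->
  howe_vector O varpi psi rho lam m W ->
  (forall i, a 0 i != 0) -> (forall i, a' 0 i != 0) -> (forall i, b 0 i != 0) ->
  upper_unipotent ur -> upper_unipotent u ->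
  W (antiblk a b *m blk3 ur (ur *m omega F r *m diag_mx a' *m u)) != 0 ->
  [/\ (forall i : 'I_r,
         inpm O varpi m (a 0 (widen_ord (leqnSn r) i) / a 0 (lift ord0 i) - 1)),
      inJ O varpi m (blk3 1%:M (omega F r *m diag_mx a' *m u)) &
      W (antiblk a b *m blk3 ur (ur *m omega F r *m diag_mx a' *m u))
        = W (antiblk a b *m blk3 ur 0)].
Proof.
move=> hF hpsi hrho _ _ hlam m_gt0 hW a_neq0 _ b_neq0 ur_unipotent _.
rewrite -!(mulmxA ur) -[blk3 ur 0](congr1 (blk3 ur) (mulmx0 _ ur)).
exact: (twist_support hF hpsi a_neq0 b_neq0 ur_unipotent hrho hlam hW m_gt0).
Qed.
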